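(* Let $d\ge2$, $p_c(z)=\bar z^d+c$, let $W$ be a hyperbolic component of odd period $k$ and let $c_0\in\partial W$ be a parameter for which $p_{c_0}$ has a simple parabolic orbit $z_0,\dots,z_{k-1}$. Let $\varphi_{c_0}$ be a local holomorphic coordinate near $z_0$ with $\varphi_{c_0}(z_0)=0$ and $\varphi_{c_0}\circ p_{c_0}^{\circ 2k}\circ\varphi_{c_0}^{-1}(\zeta)=\zeta+\zeta^2h(\zeta)$ with $h(0)=1$. Then for every $\varepsilon>0$ one can choose a neighborhood $V$ of $c_0$ in parameter space and a neighborhood $U$ of $z_0$ in the dynamical plane such that for every $c\in V$ there is a holomorphic coordinate $\varphi_c:U\to\mathbb{C}$ and a number $a_c\in\mathbb{C}$ satisfying $$f_c(\zeta):=\varphi_c\circ p_c^{\circ 2k}\circ\varphi_c^{-1}(\zeta)=\zeta+(\zeta^2-a_c^2)h_c(\zeta)$$ with $h_c$ holomorphic and $|h_c(\zeta)-1|<\varepsilon$ for all $\zeta\in\varphi_c(U)$.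
   Context: A hyperbolic component of period $n$ is a connected component of the set of parameters $c$ for which $p_c$ has an attracting periodic orbit of period $n$. A periodic orbit of odd period $k$ is parabolic if $(p_c^{\circ2k})'=1$ at its points ($p_c^{\circ2k}$ is holomorphic), and simple if $p_c^{\circ2k}(z_0+w)=z_0+w+aw^2+O(w^3)$ with $a\ne0$. *)

From Stdlib Require Import Reals.
From Coquelicot Require Import Coquelicot.

Open Scope C_scope.

Definition pc (d : nat) (c : C) (z : C) : C := (Cconj z ^ d + c)%C.

Definition iter (n : nat) (f : C -> C) : C -> C := fun z => Nat.iter n f z.

Definition holo_on (f : C -> C) (U : C -> Prop) : Prop :=
  forall z, U z -> ex_derive f z.

Definition inj_on (f : C -> C) (U : C -> Prop) : Prop :=
  forall x y, U x -> U y -> f x = f y -> x = y.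

Definition img (f : C -> C) (U : C -> Prop) : C -> Prop :=
  fun w => exists z, U z /\ f z = w.

Definition exact_period (f : C -> C) (n : nat) (z : C) : Prop :=
  (0 < n)%nat /\ iter n f z = z /\
  (forall j, (0 < j)%nat -> (j < n)%nat -> iter j f z <> z).

(* attracting periodic point of period n of p_c: the multiplier of the
   holomorphic map p_c^{2n} at z has modulus < 1 *)
Definition attracting_pt (d : nat) (c : C) (n : nat) (z : C) : Prop :=
  exact_period (pc d c) n z /\
  exists l : C, is_derive (iter (2 * n) (pc d c)) z l /\ (Cmod l < 1)%R.

Definition has_attracting (d n : nat) (c : C) : Prop :=
  exists z, attracting_pt d c n z.

Definition connected_set (S : C -> Prop) : Prop :=
  forall A B : C -> Prop, open A -> open B ->
    (forall x, S x -> A x \/ B x) ->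
    (exists x, S x /\ A x) -> (exists x, S x /\ B x) ->
    exists x, S x /\ A x /\ B x.

(* W is a connected component of {c | p_c has an attracting orbit of period n} *)
Definition hyperbolic_component (d n : nat) (W : C -> Prop) : Prop :=
  exists c1, has_attracting d n c1 /\
    forall c, W c <-> exists S, connected_set S /\
        (forall x, S x -> has_attracting d n x) /\ S c1 /\ S c.

Definition in_boundary (W : C -> Prop) (c : C) : Prop :=
  (forall e : R, (0 < e)%R -> exists x, W x /\ (Cmod (x - c) < e)%R) /\
  (forall e : R, (0 < e)%R -> exists x, ~ W x /\ (Cmod (x - c) < e)%R).

Definition simple_parabolic (d : nat) (c : C) (k : nat) (z0 : C) : Prop :=
  exact_period (pc d c) k z0 /\
  is_derive (iter (2 * k) (pc d c)) z0 (RtoC 1) /\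
  exists a : C, a <> RtoC 0 /\
    exists M r : R, (0 < r)%R /\
      forall w : C, (Cmod w < r)%R ->
        (Cmod (iter (2 * k) (pc d c) (z0 + w) - (z0 + w + a * w ^ 2))
           <= M * Cmod w ^ 3)%R.

(* Two steps of z |-> conj z ^ d + c compose to the polynomial z |-> (z ^ d + conj c) ^ d + c,
   so w |-> p_c^(2k)(z0 + w) - (z0 + w) is a monic polynomial G_c of degree (d ^ 2) ^ k whose
   coefficients depend continuously on c.  Simple parabolicity says G_c0(w) = a w ^ 2 + O(w ^ 3),
   i.e. the two lowest coefficients of G_c0 vanish and the third is a.  For c near c0 these
   coefficients are still small while all coefficients stay bounded, so by Cauchy's bound on the
   roots G_c keeps two roots r1, r2 near 0: G_c = (w - r1) (w - r2) Q_c with Q_c close to a on a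
   fixed disc.  In the affine coordinate zeta = a (w - (r1 + r2) / 2) the map p_c^(2k) reads
   zeta |-> zeta + (zeta ^ 2 - a_c ^ 2) Q_c / a with a_c = a (r1 - r2) / 2.  The given coordinate
   phi_c0 and the component W play no role, and of the oddness of k only k > 0 is used. *)

From Pilot Require Import Defs.
From Stdlib Require Import Reals Lra.
From Coquelicot Require Import Coquelicot.
From mathcomp Require Import ssreflect.

Local Open Scope R_scope.

Lemma open_norm_lt {K : AbsRing} {V : NormedModule K} (x0 : V) (rho : R) :
  open (fun x : V => norm (minus x x0) < rho).
Proof.
move=> x hx.
have nf := @norm_factor_gt_0 K V.
have he : 0 < (rho - norm (minus x x0)) / @norm_factor K V.
  by apply: Rdiv_lt_0_compat; lra.
exists (mkposreal _ he) => y /norm_compat2 /= hy.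
rewrite (minus_trans x y x0); apply: Rle_lt_trans (norm_triangle _ _) _.
rewrite /Rdiv -Rmult_assoc (Rmult_comm _ (rho - _)) Rmult_assoc Rinv_r in hy; lra.
Qed.

Lemma open_Cmod_lt (z0 : C) (rho : R) : open (fun z => Cmod (z - z0) < rho).
Proof. exact: (@open_norm_lt C_AbsRing C_NormedModule). Qed.

From mathcomp Require Import all_boot all_order all_algebra.
From mathcomp.real_closed Require Import complex.
From mathcomp Require Import Rstruct lra ring zify.
Import Order.TTheory GRing.Theory Num.Theory.
Local Open Scope ring_scope.
Notation Ri := (complex R).

(* Coquelicot's [C] and MathComp's [R[i]] are both pairs of reals; the algebra is done in
   [R[i]], an algebraically closed field, so polynomials split into linear factors. *)
Definition toRi (z : C) : Ri := Complex (fst z) (snd z).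
Definition ofRi (x : Ri) : C := (complex.Re x, complex.Im x).

Lemma toRiK : cancel toRi ofRi. Proof. by case. Qed.
Lemma ofRiK : cancel ofRi toRi. Proof. by case. Qed.
Lemma toRi_inj : injective toRi. Proof. exact: can_inj toRiK. Qed.

Lemma toRiD x y : toRi (Cplus x y) = toRi x + toRi y. Proof. by case: x; case: y. Qed.
Lemma toRiM x y : toRi (Cmult x y) = toRi x * toRi y. Proof. by case: x; case: y. Qed.
Lemma toRiB x y : toRi (Cminus x y) = toRi x - toRi y. Proof. by case: x; case: y. Qed.
Lemma toRiJ x : toRi (Cconj x) = conjc (toRi x). Proof. by case: x. Qed.
Lemma toRi1 : toRi (RtoC 1) = 1. Proof. by []. Qed.
Lemma toRiX x n : toRi (Cpow x n) = toRi x ^+ n.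
Proof. by elim: n => [|n IH] //=; rewrite toRiM IH exprS. Qed.

Lemma ofRiD x y : ofRi (x + y) = Cplus (ofRi x) (ofRi y).
Proof. by apply: toRi_inj; rewrite toRiD !ofRiK. Qed.
Lemma ofRiM x y : ofRi (x * y) = Cmult (ofRi x) (ofRi y).
Proof. by apply: toRi_inj; rewrite toRiM !ofRiK. Qed.

Definition cmod (x : Ri) : R := Cmod (ofRi x).

Lemma cmod_toRi z : cmod (toRi z) = Cmod z.
Proof. by rewrite /cmod toRiK. Qed.

Lemma cmod_ge0 x : 0 <= cmod x. Proof. exact/RleP/Cmod_ge_0. Qed.
Lemma cmod0 : cmod 0 = 0. Proof. exact: Cmod_0. Qed.
Lemma cmod1 : cmod 1 = 1. Proof. exact: Cmod_1. Qed.
Lemma cmodM x y : cmod (x * y) = cmod x * cmod y.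
Proof. by rewrite /cmod ofRiM Cmod_mult. Qed.
Lemma cmodN x : cmod (- x) = cmod x.
Proof. by rewrite /cmod -[RHS]Cmod_opp; case: x. Qed.
Lemma cmodJ x : cmod (conjc x) = cmod x.
Proof. by rewrite /cmod -[RHS]Cmod_conj; case: x. Qed.
Lemma cmodX x n : cmod (x ^+ n) = cmod x ^+ n.
Proof. by elim: n => [|n IH]; rewrite ?cmod1 // !exprS cmodM IH. Qed.
Lemma cmod_real r : cmod (Complex r 0) = `|r|.
Proof. exact: Cmod_R. Qed.

Lemma ler_cmodD x y : cmod (x + y) <= cmod x + cmod y.
Proof. by rewrite /cmod ofRiD; apply/RleP/Cmod_triangle. Qed.
Lemma ler_cmodB x y : cmod (x - y) <= cmod x + cmod y.
Proof. by rewrite -(cmodN y); apply: ler_cmodD. Qed.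
Lemma ler_cmod_sub x y : cmod x - cmod y <= cmod (x + y).
Proof. by have := ler_cmodD (x + y) (- y); rewrite addrK cmodN; lra. Qed.

Lemma cmod_eq0 x : (cmod x == 0) = (x == 0).
Proof.
apply/eqP/eqP => [/Cmod_eq_0 h|->]; last exact: cmod0.
by rewrite -(ofRiK x) h.
Qed.
Lemma cmod_gt0 x : (0 < cmod x) = (x != 0).
Proof. by rewrite lt_def cmod_eq0 cmod_ge0 andbT. Qed.
Lemma cmodV x : cmod x^-1 = (cmod x)^-1.
Proof.
have [->|hx] := eqVneq x 0; first by rewrite invr0 cmod0 invr0.
by apply: (mulIf (x := cmod x)); rewrite ?cmod_eq0 // -cmodM !mulVf ?cmod1 ?cmod_eq0.
Qed.

Lemma ler_cmod_sum n (F : 'I_n -> Ri) : cmod (\sum_(i < n) F i) <= \sum_(i < n) cmod (F i).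
Proof.
elim: n F => [|n IH] F; first by rewrite !big_ord0 cmod0.
by rewrite !big_ord_recr /=; apply: le_trans (ler_cmodD _ _) _; rewrite lerD2r.
Qed.

Lemma cmod_prod (I : Type) (s : seq I) (f : I -> Ri) :
  cmod (\prod_(i <- s) f i) = \prod_(i <- s) cmod (f i).
Proof. by elim: s => [|i s IH]; rewrite ?big_nil ?cmod1 // !big_cons cmodM IH. Qed.


Definition cont_at (f : Ri -> Ri) (x0 : Ri) := forall e : R, 0 < e ->
  exists2 dl : R, 0 < dl & forall x, cmod (x - x0) < dl -> cmod (f x - f x0) < e.

Section Continuity.
Variable x0 : Ri.

Lemma eq_cont_at f g : f =1 g -> cont_at f x0 -> cont_at g x0.
Proof.
move=> E hf e he; have [d hd H] := hf e he.
by exists d => // x hx; rewrite -!E; apply: H.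
Qed.

Lemma cont_at_cst a : cont_at (fun _ => a) x0.
Proof. by move=> e he; exists 1 => // x _; rewrite subrr cmod0. Qed.

Lemma cont_at_id : cont_at id x0.
Proof. by move=> e he; exists e. Qed.

Lemma cont_at_conjc : cont_at conjc x0.
Proof. by move=> e he; exists e => // x; rewrite -rmorphB cmodJ. Qed.

Lemma cont_atD f g : cont_at f x0 -> cont_at g x0 -> cont_at (fun x => f x + g x) x0.
Proof.
move=> hf hg e he; have he2 : 0 < e / 2 by lra.
have [d1 hd1 H1] := hf _ he2; have [d2 hd2 H2] := hg _ he2.
exists (Num.min d1 d2) => [|x]; first by rewrite lt_min hd1 hd2.
rewrite lt_min => /andP[/H1 h1 /H2 h2].
have -> : f x + g x - (f x0 + g x0) = (f x - f x0) + (g x - g x0) by ring.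
by apply: le_lt_trans (ler_cmodD _ _) _; lra.
Qed.

Lemma cont_atN f : cont_at f x0 -> cont_at (fun x => - f x) x0.
Proof.
move=> hf e he; have [d hd H] := hf _ he.
by exists d => // x hx; rewrite -opprD cmodN; apply: H.
Qed.

Lemma cont_atM f g : cont_at f x0 -> cont_at g x0 -> cont_at (fun x => f x * g x) x0.
Proof.
move=> hf hg e he.
set A := cmod (f x0); set B := cmod (g x0).
have hA : 0 <= A := cmod_ge0 _; have hB : 0 <= B := cmod_ge0 _.
have hef : 0 < e / (2 * (B + 1)) by apply: divr_gt0; lra.
have heg : 0 < Num.min 1 (e / (2 * (A + 1))).
  by rewrite lt_min ltr01 divr_gt0 //; lra.
have [d1 hd1 H1] := hf _ hef; have [d2 hd2 H2] := hg _ heg.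
exists (Num.min d1 d2) => [|x]; first by rewrite lt_min hd1 hd2.
rewrite lt_min => /andP[/H1 F1 /H2]; rewrite lt_min => /andP[G1 G2].
have -> : f x * g x - f x0 * g x0 = (f x - f x0) * g x + f x0 * (g x - g x0) by ring.
apply: le_lt_trans (ler_cmodD _ _) _; rewrite !cmodM -/A.
have hgx : cmod (g x) <= B + 1.
  by have := ler_cmodD (g x - g x0) (g x0); rewrite subrK -/B; lra.
have P1 : cmod (f x - f x0) * cmod (g x) < e / 2.
  have h1 : cmod (f x - f x0) * (2 * (B + 1)) < e by rewrite -ltr_pdivlMr //; lra.
  have h2 := ler_wpM2l (cmod_ge0 (f x - f x0)) hgx.
  nra.
have P2 : A * cmod (g x - g x0) <= e / 2.
  have h1 : cmod (g x - g x0) * (2 * (A + 1)) <= e by rewrite -ler_pdivlMr //; [exact: ltW | lra].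
  have h2 := cmod_ge0 (g x - g x0).
  nra.
lra.
Qed.

Lemma cont_at_sum n (F : 'I_n -> Ri -> Ri) :
  (forall i, cont_at (F i) x0) -> cont_at (fun x => \sum_(i < n) F i x) x0.
Proof.
elim: n F => [|n IH] F hF.
  by apply: (eq_cont_at (fun _ => 0)) (cont_at_cst _) => x; rewrite big_ord0.
apply: (eq_cont_at (fun x => \sum_(i < n) F (widen_ord (leqnSn n) i) x + F ord_max x)).
  by move=> x; rewrite big_ord_recr.
by apply: cont_atD (hF _); apply: IH.
Qed.

Lemma cont_at_simultaneous (g : nat -> Ri -> Ri) n :
  (forall j, cont_at (g j) x0) -> forall e, 0 < e ->
  exists2 dl : R, 0 < dl & forall x, cmod (x - x0) < dl ->
     forall j, (j <= n)%N -> cmod (g j x - g j x0) < e.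
Proof.
move=> hg e he; elim: n => [|n [d hd H]].
  have [d hd H] := hg 0%N e he.
  by exists d => // x hx j; rewrite leqn0 => /eqP->; apply: H.
have [d' hd' H'] := hg n.+1 e he.
exists (Num.min d d') => [|x]; first by rewrite lt_min hd hd'.
rewrite lt_min => /andP[h1 h2] j; rewrite leq_eqVlt => /orP[/eqP->|]; first exact: H'.
exact: H.
Qed.

Definition coef_cont (P : Ri -> {poly Ri}) := forall j, cont_at (fun c => (P c)`_j) x0.

Lemma coef_cont_cst p : coef_cont (fun _ => p).
Proof. by move=> j; apply: cont_at_cst. Qed.

Lemma coef_contC f : cont_at f x0 -> coef_cont (fun c => (f c)%:P).
Proof.
move=> hf j; apply: (eq_cont_at (fun c => if j == 0%N then f c else 0)).
  by move=> x; rewrite coefC.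
by case: (j == 0%N); [exact: hf | exact: cont_at_cst].
Qed.

Lemma coef_contD P Q : coef_cont P -> coef_cont Q -> coef_cont (fun c => P c + Q c).
Proof.
move=> hP hQ j; apply: (eq_cont_at (fun c => (P c)`_j + (Q c)`_j)).
  by move=> x; rewrite coefD.
exact: cont_atD.
Qed.

Lemma coef_contB P Q : coef_cont P -> coef_cont Q -> coef_cont (fun c => P c - Q c).
Proof.
move=> hP hQ j; apply: (eq_cont_at (fun c => (P c)`_j + - (Q c)`_j)).
  by move=> x; rewrite coefB.
exact/cont_atD/cont_atN.
Qed.

Lemma coef_contM P Q : coef_cont P -> coef_cont Q -> coef_cont (fun c => P c * Q c).
Proof.
move=> hP hQ j.
apply: (eq_cont_at (fun c => \sum_(i < j.+1) (P c)`_i * (Q c)`_(j - i))).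
  by move=> x; rewrite coefM.
by apply: cont_at_sum => i; apply: cont_atM.
Qed.

Lemma coef_contX P n : coef_cont P -> coef_cont (fun c => P c ^+ n).
Proof.
move=> hP; elim: n => [|n IH] j.
  by apply: (eq_cont_at (fun _ => (1 : {poly Ri})`_j)) (cont_at_cst _).
apply: (eq_cont_at (fun c => (P c * P c ^+ n)`_j)); first by move=> x; rewrite exprS.
exact: coef_contM.
Qed.

End Continuity.


Definition pc2_poly (d : nat) (c : Ri) (p : {poly Ri}) : {poly Ri} :=
  (p ^+ d + (conjc c)%:P) ^+ d + c%:P.

Definition iter_pc_poly d k c (z0 : Ri) := iter k (pc2_poly d c) ('X + z0%:P).

Definition displacement d k c (z0 : Ri) := iter_pc_poly d k c z0 - ('X + z0%:P).

Lemma toRi_pc d c z : toRi (pc d c z) = conjc (toRi z) ^+ d + toRi c.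
Proof. by rewrite /pc toRiD toRiX toRiJ. Qed.

Lemma horner_iter_pc_poly d n (c z : C) w :
  (iter_pc_poly d n (toRi c) (toRi z)).[w] =
  toRi (Nat.iter (2 * n) (pc d c) (ofRi (toRi z + w))).
Proof.
elim: n => [|n IH]; first by rewrite /= !hornerE ofRiK addrC.
rewrite [iter_pc_poly _ _ _ _]iterS /pc2_poly !hornerE -/(iter_pc_poly d n _ _) IH.
have iterSS m (f : C -> C) x : Nat.iter m.+2 f x = f (f (Nat.iter m f x)) by [].
have conjcXD (x y : Ri) : conjc (conjc x ^+ d + y) = x ^+ d + conjc y.
  have -> : conjc (conjc x ^+ d + y) = conjc (conjc x ^+ d) + conjc y by apply: rmorphD.
  have -> : conjc (conjc x ^+ d) = conjc (conjc x) ^+ d by apply: rmorphXn.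
  by rewrite conjcK.
by rewrite mulnS iterSS !toRi_pc conjcXD.
Qed.

Lemma monic_size_expDC {p : {poly Ri}} n a : p \is monic -> (1 < size p)%N -> (0 < n)%N ->
  [/\ p ^+ n + a%:P \is monic, (1 < size (p ^+ n + a%:P)%R)%N
    & (size (p ^+ n + a%:P)%R).-1 = ((size p).-1 * n)%N].
Proof.
move=> pm sp n0; have pnm : p ^+ n \is monic by apply: monic_exp.
have spn : (1 < size (p ^+ n))%N.
  have := size_exp p n; rewrite -!subn1 => e.
  have : (0 < (size p - 1) * n)%N by rewrite muln_gt0 subn_gt0 sp n0.
  by rewrite -e subn_gt0.
have ltCpn : (size a%:P < size (p ^+ n))%N := leq_ltn_trans (size_polyC_leq1 a) spn.
rewrite size_polyDl // monicE lead_coefDl // -monicE size_exp; split=> //.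
Qed.

Lemma pc2_poly_monic {d} c {p} : (0 < d)%N -> p \is monic -> (1 < size p)%N ->
  [/\ pc2_poly d c p \is monic, (1 < size (pc2_poly d c p))%N
    & (size (pc2_poly d c p)).-1 = ((size p).-1 * (d * d))%N].
Proof.
move=> d0 pm sp; have [m1 s1 e1] := monic_size_expDC d (conjc c) pm sp d0.
have [m2 s2 e2] := monic_size_expDC d c m1 s1 d0.
by split; rewrite // e2 e1 mulnA.
Qed.

Lemma iter_pc_poly_monic {d} k c z0 : (0 < d)%N ->
  iter_pc_poly d k c z0 \is monic /\ (size (iter_pc_poly d k c z0)).-1 = ((d * d) ^ k)%N.
Proof.
move=> d0; suff : [/\ iter_pc_poly d k c z0 \is monic, (1 < size (iter_pc_poly d k c z0))%N
                    & (size (iter_pc_poly d k c z0)).-1 = ((d * d) ^ k)%N] by case.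
elim: k => [|k [m s e]]; first by rewrite /= monicXaddC size_XaddC.
have [m' s' e'] := pc2_poly_monic c d0 m s.
by rewrite /iter_pc_poly iterS; split; rewrite // e' e expnSr.
Qed.

Lemma displacement_monic d k c z0 : (1 < d)%N -> (0 < k)%N ->
  displacement d k c z0 \is monic /\ size (displacement d k c z0) = ((d * d) ^ k).+1.
Proof.
move=> d1 k0; have [m e] := iter_pc_poly_monic k c z0 (ltnW d1).
have big : (1 < (d * d) ^ k)%N by rewrite -[X in (X < _)%N](exp1n k) ltn_exp2r; nia.
have lt2 : (size (- ('X + z0%:P)) < size (iter_pc_poly d k c z0))%N.
  by rewrite size_polyN size_XaddC; move: e; case: size => //= n; lia.
rewrite /displacement size_polyDl // monicE lead_coefDl // -monicE; split=> //.
by rewrite -e prednK // lt0n size_poly_eq0 monic_neq0.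
Qed.

Lemma iter_pc_poly_coef_cont d k c0 z0 : coef_cont c0 (fun c => iter_pc_poly d k c z0).
Proof.
elim: k => [|k IH]; first exact: coef_cont_cst.
have : coef_cont c0 (fun c => pc2_poly d c (iter_pc_poly d k c z0)).
  apply/coef_contD/coef_contC/cont_at_id/coef_contX/coef_contD/coef_contC/cont_at_conjc.
  exact: coef_contX.
by move=> H j; apply: eq_cont_at (H j) => c; rewrite /iter_pc_poly iterS.
Qed.

Lemma displacement_coef_cont d k c0 z0 : coef_cont c0 (fun c => displacement d k c z0).
Proof. exact/coef_contB/coef_cont_cst/iter_pc_poly_coef_cont. Qed.


Lemma coefXsubCM0 (r : Ri) p : (('X - r%:P) * p)`_0 = - r * p`_0.
Proof. by rewrite mulrBl coefB coefXM coefCM /= sub0r mulNr. Qed.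

Lemma coefXsubCMS (r : Ri) p j : (('X - r%:P) * p)`_j.+1 = p`_j - r * p`_j.+1.
Proof. by rewrite mulrBl coefB coefXM coefCM. Qed.

Lemma coef2_XsubCXsubCM r1 r2 (Q : {poly Ri}) :
  (('X - r1%:P) * ('X - r2%:P) * Q)`_2 = Q`_0 - (r1 + r2) * Q`_1 + r1 * r2 * Q`_2.
Proof. by rewrite -mulrA !coefXsubCMS; ring. Qed.

Lemma cmod_coef_prod_XsubC {s : seq Ri} {K : R} : 0 <= K ->
  (forall r, r \in s -> cmod r <= K) ->
  forall j, cmod (\prod_(r <- s) ('X - r%:P))`_j <= (1 + K) ^+ size s.
Proof.
move=> K0; elim: s => [|r s IH] hs j.
  by rewrite big_nil coefC; case: (j == 0%N); rewrite ?cmod1 ?cmod0 ?expr0.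
have hr : cmod r <= K by apply: hs; rewrite inE eqxx.
have {}IH j' : cmod (\prod_(r <- s) ('X - r%:P))`_j' <= (1 + K) ^+ size s.
  by apply: IH => x hx; apply: hs; rewrite inE hx orbT.
set P := \prod_(r <- s) _ in IH *; set B := (1 + K) ^+ size s in IH *.
have B0 : 0 <= B by apply: exprn_ge0; lra.
have rP i : cmod (r * P`_i) <= K * B by rewrite cmodM ler_pM ?cmod_ge0.
rewrite big_cons /= exprS -/B; case: j => [|j].
  by rewrite coefXsubCM0 mulNr cmodN; have := rP 0%N; nra.
rewrite coefXsubCMS; have := ler_cmodB P`_j (r * P`_j.+1); have := IH j; have := rP j.+1.
nra.
Qed.

Lemma cmod_root_le_monic (G : {poly Ri}) N (B : R) r : G \is monic -> size G = N.+1 ->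
  0 <= B -> (forall j, cmod G`_j <= B) -> root G r -> cmod r <= 1 + N%:R * B.
Proof.
move=> Gm sG B0 GB /rootP Gr.
have NB0 : 0 <= N%:R * B by apply: mulr_ge0.
have [r1|r1] := leP (cmod r) 1; first by lra.
have lcG : G`_N = 1 by move/monicP: Gm; rewrite lead_coefE sG.
move: Gr; rewrite horner_coef sG big_ord_recr /= lcG mul1r => Gr.
have rN : r ^+ N = - \sum_(i < N) G`_i * r ^+ i.
  by apply/eqP; rewrite -subr_eq0 opprK addrC Gr.
case: N sG lcG rN {NB0 Gr} => [|M] sG lcG rN.
  by move/eqP: rN; rewrite expr0 big_ord0 oppr0 oner_eq0.
have rM : cmod r ^+ M.+1 <= M.+1%:R * B * cmod r ^+ M.
  rewrite -[cmod r ^+ M.+1]cmodX rN cmodN.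
  apply: le_trans; first exact: ler_cmod_sum.
  have -> : M.+1%:R * B * cmod r ^+ M = \sum_(i < M.+1) (B * cmod r ^+ M).
    by rewrite sumr_const card_ord mulr_natl mulrnAl.
  apply: ler_sum => i _; rewrite cmodM cmodX.
  apply: ler_pM; [exact: cmod_ge0 | exact/exprn_ge0/cmod_ge0 | exact: GB |].
  by apply: ler_weXn2l; [lra | rewrite -ltnS].
have rM0 : 0 < cmod r ^+ M by apply: exprn_gt0; lra.
by move: rM; rewrite exprS ler_pM2r //; lra.
Qed.

Lemma cmod_coef0_prod_XsubC_ge {s : seq Ri} {mu : R} : 0 <= mu ->
  (forall r, r \in s -> mu <= cmod r) ->
  mu ^+ size s <= cmod (\prod_(r <- s) ('X - r%:P))`_0.
Proof.
move=> mu0 hs; rewrite -horner_coef0 horner_prod cmod_prod.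
elim: s hs => [|r s IH] hs; first by rewrite big_nil expr0.
rewrite big_cons /= exprS hornerXsubC sub0r cmodN.
apply: ler_pM; rewrite ?exprn_ge0 //; first by apply: hs; rewrite inE eqxx.
by apply: IH => x hx; apply: hs; rewrite inE hx orbT.
Qed.

Lemma cmod_coef1_XsubCM_ge {r : Ri} {P : {poly Ri}} {th B : R} :
  0 < th -> 0 < B -> th <= cmod P`_0 -> cmod P`_1 <= B ->
  cmod (('X - r%:P) * P)`_0 < th ^+ 2 / (2 * B) -> th / 2 <= cmod (('X - r%:P) * P)`_1.
Proof.
move=> th0 B0 P0 P1; rewrite coefXsubCM0 coefXsubCMS mulNr cmodN cmodM => small0.
have r0 := cmod_ge0 r.
have rth : cmod r * th * (2 * B) < th ^+ 2.
  rewrite -ltr_pdivlMr ?mulr_gt0 //; apply: le_lt_trans small0; exact/ler_wpM2l.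
have rB : cmod r * B < th / 2.
  rewrite ltr_pdivlMr // -(ltr_pM2r th0); move: rth; rewrite expr2; nra.
have := ler_cmod_sub P`_0 (- (r * P`_1)); rewrite cmodN cmodM.
have := ler_wpM2l r0 P1; lra.
Qed.

(* The large roots alone give a factor P_L with |P_L(0)| >= mu ^ n.  With no small root P(0)
   would be too large; with a single one r, smallness of P(0) = - r P_L(0) makes r tiny and
   then P'(0) = P_L(0) - r P_L'(0) would be too large. *)
Lemma prod_XsubC_two_small_roots {s : seq Ri} {K mu : R} :
  0 <= K -> 0 < mu -> mu <= 1 -> (forall r, r \in s -> cmod r <= K) ->
  cmod (\prod_(r <- s) ('X - r%:P))`_0 < (mu ^+ size s) ^+ 2 / (2 * (1 + K) ^+ size s) ->
  cmod (\prod_(r <- s) ('X - r%:P))`_1 < mu ^+ size s / 2 ->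
  exists r1 r2 (Q : {poly Ri}), \prod_(r <- s) ('X - r%:P) = ('X - r1%:P) * ('X - r2%:P) * Q /\
    [/\ cmod r1 < mu, cmod r2 < mu, forall j, cmod Q`_j <= (1 + K) ^+ size s
       & (size Q <= size s)%N].
Proof.
move=> K0 mu0 mu1 sK; set P := \prod_(r <- s) _.
set th := mu ^+ size s; set B := (1 + K) ^+ size s => small0 small1.
have th0 : 0 < th by apply: exprn_gt0.
have B1 : 1 <= B by apply: exprn_ege1; lra.
pose S := [seq r <- s | cmod r < mu]; pose L := [seq r <- s | ~~ (cmod r < mu)].
pose PL := \prod_(r <- L) ('X - r%:P).
have EP : P = \prod_(r <- S) ('X - r%:P) * PL.
  by rewrite /P (bigID (fun r => cmod r < mu)) /S /L /PL !big_filter.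
have sSL : (size S + size L)%N = size s by rewrite !size_filter count_predC.
have Ls r : r \in L -> r \in s by rewrite mem_filter => /andP[].
have PL0 : th <= cmod PL`_0.
  have Lmu r : r \in L -> mu <= cmod r by rewrite mem_filter -leNgt => /andP[].
  apply: le_trans _ (cmod_coef0_prod_XsubC_ge (ltW mu0) Lmu).
  by apply: ler_wiXn2l; [lra | lra | rewrite -sSL leq_addl].
have PLB j : cmod PL`_j <= B.
  apply: le_trans (cmod_coef_prod_XsubC K0 (fun r h => sK r (Ls r h)) j) _.
  by apply: ler_weXn2l; [lra | rewrite -sSL leq_addl].
have Sms r : r \in S -> cmod r < mu /\ r \in s by rewrite mem_filter => /andP[].
move: EP sSL Sms; case: S => [|r1 [|r2 S']] EP sSL Sms.
- move: small0; rewrite EP big_nil mul1r.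
  have : th ^+ 2 / (2 * B) <= th / 2.
    rewrite ler_pdivrMr; last lra.
    have -> : th / 2 * (2 * B) = th * B by field.
    have th1 : th <= 1 by apply: exprn_ile1; lra.
    by rewrite expr2; nra.
  lra.
- suff : th / 2 <= cmod P`_1 by lra.
  move: small0; rewrite EP big_cons big_nil mulr1.
  by apply: (cmod_coef1_XsubCM_ge th0 _ PL0 (PLB 1%N)); lra.
- exists r1, r2, (\prod_(r <- S' ++ L) ('X - r%:P)); split.
    by rewrite EP !big_cons big_cat /= !mulrA.
  have [r1mu _] := Sms r1 (mem_head _ _).
  have [r2mu _] : cmod r2 < mu /\ r2 \in s by apply: Sms; rewrite !inE eqxx orbT.
  split => // [j|]; last by rewrite size_prod_XsubC size_cat -sSL /=; lia.
  apply: le_trans (cmod_coef_prod_XsubC K0 _ j) _.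
    move=> r; rewrite mem_cat => /orP[h|/Ls]; last exact: sK.
    by apply: sK; case: (Sms r) => //; rewrite !inE h !orbT.
  by apply: ler_weXn2l; [lra | rewrite size_cat -sSL /=; lia].
Qed.


Lemma cmod_horner_sub_coef0_le {p : {poly Ri}} {n} {B : R} w : (size p <= n.+1)%N -> 0 <= B ->
  (forall j, cmod p`_j <= B) -> cmod w <= 1 -> cmod (p.[w] - p`_0) <= n%:R * B * cmod w.
Proof.
move=> sp B0 pB w1.
rewrite (horner_coef_wide _ sp) big_ord_recl /= expr0 mulr1 addrC addKr.
apply: le_trans; first exact: ler_cmod_sum.
have -> : n%:R * B * cmod w = \sum_(i < n) (B * cmod w).
  by rewrite sumr_const card_ord mulr_natl mulrnAl.
apply: ler_sum => i _; rewrite cmodM cmodX.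
apply: ler_pM; [exact: cmod_ge0 | exact/exprn_ge0/cmod_ge0 | exact: pB |].
by rewrite -[leRHS]expr1; apply: ler_wiXn2l; [exact: cmod_ge0 | exact: w1 | ].
Qed.

Lemma cmod_coef_le_sum (p : {poly Ri}) j : cmod p`_j <= \sum_(i < size p) cmod p`_i.
Proof.
have ge0 : 0 <= \sum_(i < size p | i != j :> nat) cmod p`_i.
  by apply: sumr_ge0 => i _; apply: cmod_ge0.
have [lt_jp|le_pj] := ltnP j (size p).
  by rewrite (bigD1 (Ordinal lt_jp)) //= lerDl.
by rewrite nth_default // cmod0; apply: sumr_ge0 => i _; apply: cmod_ge0.
Qed.

Lemma eq0_of_cmod_le_linear (x : Ri) (D t0 : R) : 0 < t0 ->
  (forall t, 0 < t -> t < t0 -> cmod x <= D * t) -> x = 0.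
Proof.
move=> t00 xD; apply/eqP; rewrite -cmod_eq0 eq_le cmod_ge0 andbT leNgt; apply/negP => x0.
have D0 : 0 <= D by have := xD (t0 / 2); have := cmod_ge0 x; nra.
pose t := Num.min (t0 / 2) (cmod x / (2 * (D + 1))).
have t0t : 0 < t by rewrite lt_min divr_gt0 //= divr_gt0 //; lra.
have tt0 : t < t0 by rewrite gt_min; apply/orP; left; lra.
have tx : (D + 1) * t <= cmod x / 2.
  have -> : cmod x / 2 = (D + 1) * (cmod x / (2 * (D + 1))) by field; lra.
  by apply: ler_wpM2l; [lra | rewrite ge_min lexx orbT].
have := xD t t0t tt0; nra.
Qed.

Lemma horner_drop_poly1 (p : {poly Ri}) x : p.[x] = p`_0 + (drop_poly 1 p).[x] * x.
Proof.
have take1 : take_poly 1 p = (p`_0)%:P.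
  by apply/polyP => -[|i]; rewrite coef_take_poly coefC.
by rewrite -{1}(poly_take_drop 1 p) take1 expr1 hornerD hornerC hornerMX.
Qed.

Lemma coef_eq0_of_horner_bigO {p : {poly Ri}} {n} {M t0 : R} : 0 < t0 ->
  (forall t, 0 < t -> t < t0 -> cmod p.[Complex t 0] <= M * t ^+ n) ->
  forall j, (j < n)%N -> p`_j = 0.
Proof.
elim: n p M t0 => // n IH p M t0 t00 pM.
have t1 : 0 < Num.min t0 1 by rewrite lt_min t00 ltr01.
have tlt t : t < Num.min t0 1 -> t < t0 /\ t < 1 by rewrite lt_min => /andP[].
have cmod_t t : 0 < t -> cmod (Complex t 0) = t by move=> t0'; rewrite cmod_real gtr0_norm.
have p0 : p`_0 = 0.
  pose B := \sum_(i < size p) cmod p`_i.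
  have B0 : 0 <= B by apply: sumr_ge0 => i _; apply: cmod_ge0.
  apply: (@eq0_of_cmod_le_linear _ (`|M| + (size p)%:R * B) _ t1) => t t0' /tlt[tt0 tt1].
  have ht := pM t t0' tt0; have Mt : M * t ^+ n.+1 <= `|M| * t.
    apply: le_trans (ler_norm _) _; rewrite normrM normrX (gtr0_norm t0').
    apply: ler_wpM2l; first exact: normr_ge0.
    rewrite -[X in _ <= X]expr1; apply: ler_wiXn2l; [lra | lra | by []].
  have hl := cmod_horner_sub_coef0_le (Complex t 0) (leqnSn _) B0 (cmod_coef_le_sum p).
  rewrite cmod_t // in hl; have {}hl := hl ltac:(lra).
  have := ler_cmodB p.[Complex t 0] (p.[Complex t 0] - p`_0); rewrite opprB addrC subrK.
  move=> h; apply: (le_trans h); rewrite mulrDl; apply: lerD; [exact: le_trans ht Mt | exact: hl].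
pose q := drop_poly 1 p.
have qM t : 0 < t -> t < t0 -> cmod q.[Complex t 0] <= M * t ^+ n.
  move=> t0' tt0; have := pM t t0' tt0.
  rewrite horner_drop_poly1 p0 add0r cmodM cmod_t // exprSr mulrA.
  by rewrite ler_pM2r.
case=> [|j] ltjn; first exact: p0.
by rewrite -[j.+1]addn1 -coef_drop_poly; apply: (IH q M t0).
Qed.

Lemma taylor2_coefs (G : {poly Ri}) (a : Ri) (M r : R) : 0 < r ->
  (forall w, cmod w < r -> cmod (G.[w] - a * w ^+ 2) <= M * cmod w ^+ 3) ->
  [/\ G`_0 = 0, G`_1 = 0 & G`_2 = a].
Proof.
move=> r0 GM.
have pM t : 0 < t -> t < r -> cmod (G - a *: 'X^2).[Complex t 0] <= M * t ^+ 3.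
  move=> t0 tr; have tr' : cmod (Complex t 0) < r by rewrite cmod_real gtr0_norm.
  by have := GM _ tr'; rewrite cmod_real gtr0_norm // hornerD hornerN hornerZ hornerXn.
have c := coef_eq0_of_horner_bigO r0 pM.
have := c 0%N isT; have := c 1%N isT; have := c 2%N isT.
rewrite !coefB !coefZ !coefXn /= !mulr0 !mulr1 !subr0 => /eqP; rewrite subr_eq0 => /eqP.
by split.
Qed.

Lemma cmod_cofactor_sub_lt {r1 r2 a w : Ri} {Q : {poly Ri}} {n} {mu B e : R} :
  (size Q <= n.+1)%N -> 0 <= B -> (forall j, cmod Q`_j <= B) ->
  cmod r1 < mu -> cmod r2 < mu -> mu <= 1 -> cmod w <= 1 ->
  n%:R * B * cmod w < e / 3 -> mu * B <= e / 10 ->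
  cmod ((('X - r1%:P) * ('X - r2%:P) * Q)`_2 - a) < e / 3 ->
  cmod (Q.[w] - a) < e.
Proof.
move=> sQ B0 QB r1mu r2mu mu1 w1 wsmall muB; rewrite coef2_XsubCXsubCM => c2.
have r0 := cmod_ge0 r1; have r0' := cmod_ge0 r2.
have h0 := cmod_horner_sub_coef0_le w sQ B0 QB w1.
have e0 : 0 < e by have := cmod_ge0 (Q.[w] - Q`_0); lra.
have h1 : cmod ((r1 + r2) * Q`_1) <= 2 * (mu * B).
  rewrite cmodM mulrA; apply: ler_pM; rewrite ?cmod_ge0 ?QB //.
  by have := ler_cmodD r1 r2; lra.
have h2 : cmod (r1 * r2 * Q`_2) <= mu * B.
  rewrite !cmodM; apply: ler_pM; rewrite ?mulr_ge0 ?cmod_ge0 ?QB //; nra.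
have -> : Q.[w] - a = (Q.[w] - Q`_0) + (Q`_0 - (r1 + r2) * Q`_1 + r1 * r2 * Q`_2 - a)
                      + (r1 + r2) * Q`_1 - r1 * r2 * Q`_2 by ring.
have := ler_cmodB ((Q.[w] - Q`_0) + (Q`_0 - (r1 + r2) * Q`_1 + r1 * r2 * Q`_2 - a)
                  + (r1 + r2) * Q`_1) (r1 * r2 * Q`_2).
have := ler_cmodD ((Q.[w] - Q`_0) + (Q`_0 - (r1 + r2) * Q`_1 + r1 * r2 * Q`_2 - a))
                  ((r1 + r2) * Q`_1).
have := ler_cmodD (Q.[w] - Q`_0) (Q`_0 - (r1 + r2) * Q`_1 + r1 * r2 * Q`_2 - a).
lra.
Qed.


Lemma monic_two_small_roots {G : {poly Ri}} {N} {B mu : R} :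
  G \is monic -> size G = N.+1 -> 0 <= B -> (forall j, cmod G`_j <= B) -> 0 < mu -> mu <= 1 ->
  let BQ := (1 + (1 + N%:R * B)) ^+ N in
  cmod G`_0 < (mu ^+ N) ^+ 2 / (2 * BQ) -> cmod G`_1 < mu ^+ N / 2 ->
  exists r1 r2 (Q : {poly Ri}), G = ('X - r1%:P) * ('X - r2%:P) * Q /\
    [/\ cmod r1 < mu, cmod r2 < mu, forall j, cmod Q`_j <= BQ & (size Q <= N)%N].
Proof.
move=> Gm sG B0 GB mu0 mu1 BQ small0 small1.
have [s Gs] := closed_field_poly_normal G.
rewrite (monicP Gm) scale1r in Gs.
have ss : size s = N by have := size_prod_XsubC s id; rewrite -Gs sG => -[].
have K0 : 0 <= 1 + N%:R * B by apply: addr_ge0 => //; apply: mulr_ge0.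
have sK r : r \in s -> cmod r <= 1 + N%:R * B.
  by move=> rs; apply: cmod_root_le_monic Gm sG B0 GB _; rewrite Gs root_prod_XsubC.
by have := prod_XsubC_two_small_roots K0 mu0 mu1 sK; rewrite -Gs ss; apply.
Qed.

Lemma exists_small_factor (C e : R) : 0 <= C -> 0 < e ->
  exists2 x : R, 0 < x /\ x <= 1 & C * x < e.
Proof.
move=> C0 e0; exists (Num.min 1 (e / (C + 1))).
  by rewrite lt_min ltr01 divr_gt0 //=; [split; rewrite ?ge_min ?lexx | lra].
have le_x : C * Num.min 1 (e / (C + 1)) <= C * (e / (C + 1)).
  by rewrite ler_wpM2l // ge_min lexx orbT.
apply: le_lt_trans le_x _; rewrite mulrA ltr_pdivrMr; last lra.
by rewrite mulrDr mulr1 mulrC ltrDl.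
Qed.

Lemma two_small_roots_near {G : Ri -> {poly Ri}} {c0 a : Ri} {N} {e : R} :
  (2 <= N)%N -> (forall c, G c \is monic) -> (forall c, size (G c) = N.+1) ->
  coef_cont c0 G -> [/\ (G c0)`_0 = 0, (G c0)`_1 = 0 & (G c0)`_2 = a] -> 0 < e ->
  exists2 dl : R, 0 < dl & exists2 rho : R, 0 < rho & forall c, cmod (c - c0) < dl ->
    exists r1 r2 (Q : {poly Ri}), G c = ('X - r1%:P) * ('X - r2%:P) * Q /\
      forall w, cmod w < rho -> cmod (Q.[w] - a) < e.
Proof.
move=> N2 Gm sG Gc [g0 g1 g2] e0.
pose B := \sum_(i < N.+1) cmod (G c0)`_i + 1.
have B1 : 1 <= B by rewrite lerDr; apply: sumr_ge0 => i _; apply: cmod_ge0.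
pose BQ := (1 + (1 + N%:R * B)) ^+ N.
have NB0 : 0 <= N%:R * B by apply: mulr_ge0 => //; lra.
have BQ1 : 1 <= BQ by apply: exprn_ege1; lra.
have [mu [mu0 mu1] muBQ] : exists2 mu, 0 < mu /\ mu <= 1 & BQ * mu < e / 10.
  by apply: exists_small_factor; lra.
have NBQ0 : 0 <= N%:R * BQ by apply: mulr_ge0 => //; lra.
have [rho [rho0 rho1] rhoN] : exists2 rho, 0 < rho /\ rho <= 1 & N%:R * BQ * rho < e / 3.
  by apply: exists_small_factor; lra.
pose th := mu ^+ N; have th0 : 0 < th by apply: exprn_gt0.
pose eta := Num.min (Num.min 1 (e / 3)) (Num.min (th ^+ 2 / (2 * BQ)) (th / 2)).
have eta0 : 0 < eta.
  by rewrite !lt_min ltr01 !divr_gt0 ?exprn_gt0 //; lra.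
have [dl dl0 near] := @cont_at_simultaneous c0 _ N Gc _ eta0.
exists dl => //; exists rho => // c /near Gnear.
have Gnear0 j : (j <= 2)%N -> cmod ((G c)`_j - (G c0)`_j) < eta.
  by move=> j2; apply: Gnear; apply: leq_trans j2 N2.
have GB j : cmod (G c)`_j <= B.
  have [jN|Nj] := leqP j N; last by rewrite nth_default ?sG // cmod0; lra.
  rewrite -[(G c)`_j](subrK (G c0)`_j) /B addrC.
  apply: le_trans (ler_cmodD _ _) _; apply: lerD; first by rewrite -(sG c0) cmod_coef_le_sum.
  by apply: ltW; apply: lt_le_trans (Gnear j jN) _; rewrite !ge_min lexx.
have eta_le x : x \in [:: th ^+ 2 / (2 * BQ); th / 2; e / 3] -> eta <= x.
  by rewrite !inE => /or3P[] /eqP->; rewrite !ge_min lexx !orbT.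
have small0 : cmod (G c)`_0 < th ^+ 2 / (2 * BQ).
  by have := Gnear0 0%N isT; rewrite g0 subr0 => /lt_le_trans; apply; apply: eta_le; rewrite inE eqxx.
have small1 : cmod (G c)`_1 < th / 2.
  by have := Gnear0 1%N isT; rewrite g1 subr0 => /lt_le_trans; apply; apply: eta_le; rewrite !inE eqxx orbT.
have [r1 [r2 [Q [GQ [r1mu r2mu QB sQ]]]]] :=
  monic_two_small_roots (Gm c) (sG c) (le_trans ler01 B1) GB mu0 mu1 small0 small1.
exists r1, r2, Q; split=> // w wr.
have w1 : cmod w <= 1 by apply: ltW; apply: lt_le_trans wr rho1.
have wsmall : N%:R * BQ * cmod w < e / 3.
  by apply: le_lt_trans rhoN; apply/ler_wpM2l/ltW.
apply: (cmod_cofactor_sub_lt (leqW sQ) (le_trans ler01 BQ1) QB r1mu r2mu mu1 w1 wsmall).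
  by rewrite mulrC ltW.
have := Gnear0 2%N isT; rewrite g2 -GQ => /lt_le_trans; apply; apply: eta_le.
by rewrite !inE eqxx !orbT.
Qed.

Lemma ex_derive_horner (p : {poly Ri}) (z : C) : ex_derive (fun x => ofRi p.[toRi x]) z.
Proof.
pose K := AbsRing_NormedModule C_AbsRing.
suff [l pl] : exists l, @is_derive C_AbsRing K (fun x => ofRi p.[toRi x]) z l.
  exists (scal l (RtoC 1)).
  apply: (is_derive_ext _ _ _ _ _ (is_derive_scal_l _ _ _ (RtoC 1) pl)) => x /=.
  exact: Cmult_1_r.
elim/poly_ind: p => [|q c [l ql]].
  exists (@zero K); apply: (is_derive_ext _ _ _ _ _ (@is_derive_const C_AbsRing K (ofRi 0) z)) => x.
  by rewrite horner0.
have qX := @is_derive_mult C_AbsRing _ _ z _ _ ql (@is_derive_id C_AbsRing z) Cmult_comm.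
eexists; apply: (is_derive_ext _ _ _ _ _ (is_derive_plus _ _ z _ _ qX (@is_derive_const C_AbsRing K (ofRi c) z))).
move=> x.
by rewrite hornerMXaddC ofRiD ofRiM toRiK.
Qed.

Lemma horner_displacement d k (c z : C) w :
  (displacement d k (toRi c) (toRi z)).[w] =
  toRi (Nat.iter (2 * k) (pc d c) (ofRi (toRi z + w))) - (toRi z + w).
Proof. by rewrite /displacement hornerD hornerN horner_iter_pc_poly !hornerE [w + _]addrC. Qed.

Lemma simple_parabolic_displacement {d k c0 z0} : simple_parabolic d c0 k z0 ->
  exists2 a : Ri, a != 0 &
    let G := displacement d k (toRi c0) (toRi z0) in [/\ G`_0 = 0, G`_1 = 0 & G`_2 = a].
Proof.
move=> [_ [_ [a [a0 [M [r [r0 aM]]]]]]]; exists (toRi a).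
  by apply/eqP => a0'; apply: a0; rewrite -(toRiK a) a0'.
apply: (@taylor2_coefs _ _ M r); first exact/RltP.
move=> w /RltP /aM /RleP; rewrite -RpowE -[Cmod (ofRi w)]/(cmod w) -cmod_toRi.
rewrite toRiB !toRiD toRiM toRiX ofRiK.
by rewrite horner_displacement ofRiD toRiK opprD !addrA.
Qed.

Lemma quadratic_affine_conj (A r1 r2 w q : Ri) : A != 0 ->
  let m := (r1 + r2) / 2 in
  A * (w + (w - r1) * (w - r2) * q - m) =
  A * (w - m) + ((A * (w - m)) ^+ 2 - (A * ((r1 - r2) / 2)) ^+ 2) * (q / A).
Proof. by move=> A0 m; rewrite /m; field. Qed.

Lemma affine_normal_coordinate d k (c z0 : C) (U : C -> Prop) (A r1 r2 : Ri) (Q : {poly Ri})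
    (eps : R) :
  A != 0 -> displacement d k (toRi c) (toRi z0) = ('X - r1%:P) * ('X - r2%:P) * Q ->
  (forall z, U z -> cmod (Q.[toRi z - toRi z0] - A) < eps * cmod A) ->
  exists (phi h : C -> C) (ac : C),
    holo_on phi U /\ inj_on phi U /\ holo_on h (img phi U) /\
    (forall z, U z -> U (Defs.iter (2 * k)%coq_nat (pc d c) z) ->
       phi (Defs.iter (2 * k)%coq_nat (pc d c) z) =
       Cplus (phi z) (Cmult (Cminus (Cpow (phi z) 2) (Cpow ac 2)) (h (phi z)))) /\
    (forall z, U z -> Rlt (Cmod (Cminus (h (phi z)) (RtoC 1))) eps).
Proof.
move=> A0 GQ Qnear; pose m := (r1 + r2) / 2.
pose phi := A%:P * ('X - (toRi z0 + m)%:P).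
pose h := (Q \Po (A^-1%:P * 'X + m%:P)) * (A^-1)%:P.
have phiE z : phi.[toRi z] = A * (toRi z - toRi z0 - m).
  by rewrite /phi !hornerE opprD addrA.
have hE z : h.[phi.[toRi z]] = Q.[toRi z - toRi z0] / A.
  by rewrite phiE /h hornerM horner_comp hornerC hornerD hornerCM hornerX hornerC mulKf // subrK.
exists (fun z => ofRi phi.[toRi z]), (fun z => ofRi h.[toRi z]), (ofRi (A * ((r1 - r2) / 2))).
split; first by move=> z _; apply: ex_derive_horner.
split.
  by move=> x y _ _ /(congr1 toRi); rewrite !ofRiK !phiE => /(mulfI A0)/addIr/addIr/toRi_inj.
split; first by move=> z _; apply: ex_derive_horner.
split=> [z _ _|z Uz].
  apply: toRi_inj; rewrite toRiD toRiM toRiB !toRiX !ofRiK hE !phiE.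
  have := congr1 (horner^~ (toRi z - toRi z0)) GQ.
  rewrite horner_displacement [toRi z0 + _]addrC subrK toRiK !hornerM !hornerXsubC.
  move=> /eqP; rewrite subr_eq => /eqP ->.
  by rewrite -quadratic_affine_conj //; congr (A * (_ - m)); ring.
rewrite -cmod_toRi toRiB !ofRiK hE toRi1.
have -> : Q.[toRi z - toRi z0] / A - 1 = (Q.[toRi z - toRi z0] - A) / A by field.
have A0' : 0 < cmod A by rewrite cmod_gt0.
apply/RltP; rewrite cmodM cmodV ltr_pdivrMr //; exact: Qnear.
Qed.


Close Scope ring_scope.
Open Scope R_scope.
Open Scope C_scope.

Theorem proposition4p1 :
  forall (d : nat) (k : nat) (W : C -> Prop) (c0 z0 : C)
    (phi0 h0 : C -> C) (U0 : C -> Prop),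
    (2 <= d)%coq_nat ->
    Nat.odd k = true ->
    hyperbolic_component d k W ->
    in_boundary W c0 ->
    simple_parabolic d c0 k z0 ->
    open U0 -> U0 z0 -> holo_on phi0 U0 -> inj_on phi0 U0 ->
    phi0 z0 = RtoC 0 ->
    holo_on h0 (img phi0 U0) -> h0 (RtoC 0) = RtoC 1 ->
    (forall z, U0 z -> U0 (Defs.iter (2 * k)%coq_nat (pc d c0) z) ->
       phi0 (Defs.iter (2 * k)%coq_nat (pc d c0) z) = phi0 z + phi0 z ^ 2 * h0 (phi0 z)) ->
    forall eps : R, 0 < eps ->
    exists (V U : C -> Prop),
      open V /\ V c0 /\ open U /\ U z0 /\
      forall c, V c ->
        exists (phi h : C -> C) (a : C),
          holo_on phi U /\ inj_on phi U /\ holo_on h (img phi U) /\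
          (forall z, U z -> U (Defs.iter (2 * k)%coq_nat (pc d c) z) ->
             phi (Defs.iter (2 * k)%coq_nat (pc d c) z)
               = phi z + (phi z ^ 2 - a ^ 2) * h (phi z)) /\
          (forall z, U z -> Cmod (h (phi z) - RtoC 1) < eps).
Proof.
move=> d k W c0 z0 phi0 h0 U0 /ssrnat.leP d1 k_odd _ _ sp _ _ _ _ _ _ _ _ eps eps0.
have k0 : (0 < k)%N by case: (posnP k) k_odd => [->|].
have [A A0 GA] := simple_parabolic_displacement sp.
have N2 : (2 <= (d * d) ^ k)%N.
  by rewrite -(expn1 2) (leq_trans _ (leq_pexp2l _ k0)) ?muln_gt0 ?leq_mul; lia.
have eA0 : (0 < eps * cmod A)%R by rewrite mulr_gt0 ?cmod_gt0 //; exact/RltP.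
have [dl dl0 [rho rho0 near]] := two_small_roots_near N2
  (fun c => (displacement_monic d k c (toRi z0) d1 k0).1)
  (fun c => (displacement_monic d k c (toRi z0) d1 k0).2)
  (displacement_coef_cont d k (toRi c0) (toRi z0)) GA eA0.
have ball_center x e : 0 < e -> Cmod (x - x) < e by rewrite /Cminus Cplus_opp_r Cmod_0.
exists (fun c => Cmod (c - c0) < dl), (fun z => Cmod (z - z0) < rho).
split; first exact: open_Cmod_lt.
split; first exact/ball_center/RltP.
split; first exact: open_Cmod_lt.
split; first exact/ball_center/RltP.
move=> c /RltP cc0.
have /near [r1 [r2 [Q [GQ Qnear]]]] : (cmod (toRi c - toRi c0) < dl)%R.
  by rewrite -toRiB cmod_toRi.
apply: affine_normal_coordinate A0 GQ _ => z /RltP zz0.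
by apply: Qnear; rewrite -toRiB cmod_toRi.
Qed.
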